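(* Let $\Gamma$ be a second countable locally compact abelian group, $n\ge2$, $\omega\in\Gamma^n$. An $\omega$-invariant subset $X$ of $\Gamma$ is good if and only if every $\gamma\in X$ satisfies one of: (i) there exists $i\in\{1,\ldots,n\}$ such that $\gamma-m\omega_i\in X$ and $\gamma-m\omega_i\ne\gamma$ for every positive integer $m$; (ii) there exist $i\ne j$ in $\{1,\ldots,n\}$ such that $\gamma-m\omega_i-\omega_j\in X$ for every positive integer $m$.
   Context: A closed $X\subset\Gamma$ is $\omega$-invariant if $X+\omega_i\subset X$ for all $i$ and every $\gamma\in X$ has some $i$ with $\gamma-\omega_i\in X$. An $\omega$-invariant $X$ is bad if there is $\gamma\in X$ such that there is exactly one $i\in\{1,\ldots,n\}$ with $\gamma-\omega_i\in X$ and this $i$ satisfies $m\omega_i=0$ for some positive integer $m$; $X$ is good if it is not bad. *)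

From HB Require Import structures.
From mathcomp Require Import all_boot all_order all_algebra.
From mathcomp Require Import all_classical all_reals all_analysis.
Set Implicit Arguments. Unset Strict Implicit. Unset Printing Implicit Defensive.
Import Order.TTheory GRing.Theory Num.Theory.
Local Open Scope classical_set_scope.
Local Open Scope ring_scope.

Definition omega_invariant (G : topologicalZmodType) (n : nat)
    (om : 'I_n -> G) (X : set G) : Prop :=
  closed X /\
  (forall (i : 'I_n) (g : G), X g -> X (g + om i)) /\
  (forall g : G, X g -> exists i : 'I_n, X (g - om i)).

Definition bad (G : topologicalZmodType) (n : nat)
    (om : 'I_n -> G) (X : set G) : Prop :=
  exists g : G, X g /\
    exists i : 'I_n,
      X (g - om i) /\
      (forall j : 'I_n, X (g - om j) -> j = i) /\
      (exists m : nat, (0 < m)%N /\ om i *+ m = 0).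

Definition good (G : topologicalZmodType) (n : nat)
    (om : 'I_n -> G) (X : set G) : Prop :=
  ~ bad om X.

From HB Require Import structures.
From mathcomp Require Import all_boot all_order all_algebra.
From mathcomp Require Import all_classical all_reals all_analysis.
From mathcomp Require Import zify.
Import Order.TTheory GRing.Theory Num.Theory.
Local Open Scope classical_set_scope.
Local Open Scope ring_scope.

(* Descending far enough from gamma
   inside X, pigeonhole makes some omega_i occur as often as prescribed, and
   adding back the other steps (X + omega_j lies in X) puts gamma - m omega_i
   in X for every m.  If omega_i has infinite order this ray gives (i); if it
   is torsion, goodness supplies a second j with gamma - omega_j in X, and going
   around the finite cycle of omega_i from there gives (ii).  Conversely, at a
   bad point both (i) and (ii) force the unique descent direction to wrap
   around its finite cycle. *)

Lemma sumMn_delta {V : nmodType} {I : finType} (F : I -> V) (i : I) (k : nat) :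
  \sum_j F j *+ (k * (j == i)) = F i *+ k.
Proof.
rewrite (bigD1 i) //= eqxx muln1 big1 ?addr0 // => j /negbTE ->.
by rewrite muln0.
Qed.

Lemma exists_le_of_sum_le {I : finType} (i0 : I) {c d : I -> nat} :
  (\sum_i d i <= \sum_i c i)%N -> exists i, (d i <= c i)%N.
Proof.
move=> le_dc; apply: contrapT => no_le.
have lt_cd i : (c i < d i)%N by rewrite ltnNge; apply/negP => ?; apply: no_le; exists i.
have I_gt0 : (0 < \sum_(i : I) 1)%N by rewrite (bigD1 i0).
have : (\sum_i (c i + 1) <= \sum_i d i)%N by apply: leq_sum => i _; rewrite addn1.
rewrite big_split /=; lia.
Qed.

Section DescentInX.

Context {G : zmodType} {n : nat} {om : 'I_n -> G} {X : set G}.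
Hypothesis X_up : forall i g, X g -> X (g + om i).
Hypothesis X_down : forall g, X g -> exists i, X (g - om i).

Lemma mem_addMn i k g : X g -> X (g + om i *+ k).
Proof.
elim: k g => [|k IHk] g Xg; first by rewrite mulr0n addr0.
by rewrite mulrSr addrA; apply/X_up/IHk.
Qed.

Lemma mem_add_sumMn (c : 'I_n -> nat) g : X g -> X (g + \sum_i om i *+ c i).
Proof.
elim: (index_enum _) g => [|j s IHs] g Xg; first by rewrite big_nil addr0.
by rewrite big_cons addrA; apply/IHs/mem_addMn.
Qed.

Lemma mem_sub_sumMn_le (c d : 'I_n -> nat) g :
  (forall i, d i <= c i)%N ->
  X (g - \sum_i om i *+ c i) -> X (g - \sum_i om i *+ d i).
Proof.
move=> le_dc /(mem_add_sumMn (fun i => c i - d i)%N).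
have -> : \sum_i om i *+ c i =
          \sum_i om i *+ (c i - d i)%N + \sum_i om i *+ d i.
  by rewrite -big_split /=; apply: eq_bigr => i _; rewrite -mulrnDr subnK.
by rewrite opprD addrA addrAC subrK.
Qed.

Lemma mem_sub_torsion i m0 m h :
  (0 < m0)%N -> om i *+ m0 = 0 -> X h -> X (h - om i *+ m).
Proof.
move=> m0_gt0 om_m0 /(mem_addMn i (m * m0.-1)).
suff -> : om i *+ (m * m0.-1) = - (om i *+ m) by [].
apply/eqP; rewrite -subr_eq0 opprK -mulrnDr -mulnSr prednK //.
by rewrite mulnC mulrnA om_m0 mul0rn.
Qed.

Lemma exists_descent L {g} : X g ->
  exists c : 'I_n -> nat,
    (\sum_i c i)%N = L /\ X (g - \sum_i om i *+ c i).
Proof.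
elim: L => [|L IHL] Xg.
  by exists (fun=> 0%N); rewrite !big1 ?subr0.
have [c [sum_c Xc]] := IHL Xg; have [i Xci] := X_down _ Xc.
exists (fun j => c j + 1 * (j == i))%N; split.
  rewrite big_split /= sum_c (bigD1 i) //= eqxx big1 ?addn1 // => j /negbTE ->.
  by rewrite muln0.
rewrite (eq_bigr _ (fun j _ => mulrnDr _ _ _)) big_split /= sumMn_delta.
by rewrite mulr1n opprD addrA.
Qed.

Lemma exists_full_ray {g} : X g -> exists i, forall m, X (g - om i *+ m).
Proof.
move=> Xg; apply: contrapT => no_ray.
have /choice [M notXM] : forall i, exists m, ~ X (g - om i *+ m).
  move=> i; apply: contrapT => all_m; apply: no_ray; exists i => m.
  by apply: contrapT => notXm; apply: all_m; exists m.
have [c [sum_c Xc]] := exists_descent (\sum_i M i) Xg.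
have [i0 _] := X_down _ Xg.
have [i le_Mc] := exists_le_of_sum_le i0 (eq_leq (esym sum_c)).
apply: (notXM i); rewrite -(sumMn_delta om).
apply: mem_sub_sumMn_le Xc => j.
by case: (j =P i) => [->|_]; rewrite ?muln1 ?muln0.
Qed.

End DescentInX.

Definition ray_condition {G : zmodType} {n : nat} (om : 'I_n -> G)
    (X : set G) (g : G) : Prop :=
  (exists i : 'I_n, forall m : nat, (0 < m)%N ->
     X (g - om i *+ m) /\ g - om i *+ m <> g) \/
  (exists i j : 'I_n, i <> j /\ forall m : nat, (0 < m)%N ->
     X (g - om i *+ m - om j)).

Lemma good_of_ray_condition {G : topologicalZmodType} {n : nat}
    {om : 'I_n -> G} {X : set G} :
  (forall i g, X g -> X (g + om i)) ->
  (forall g, X g -> ray_condition om X g) -> good om X.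
Proof.
move=> X_up ray [g [Xg [i [Xgi [uniq_i [m0 [m0_gt0 om_m0]]]]]]].
case: (ray g Xg) => [[k rayk]|[k [j [neq_kj rayj]]]].
  have [Xk _] := rayk 1%N isT; rewrite mulr1n in Xk.
  have eq_ki := uniq_i _ Xk; subst k.
  by have [_] := rayk m0 m0_gt0; rewrite om_m0 subr0.
have Xkj := rayj 1%N isT; rewrite mulr1n in Xkj.
have := X_up j _ Xkj; rewrite subrK => /uniq_i eq_ki; subst k.
have := rayj m0 m0_gt0; rewrite om_m0 subr0 => /uniq_i eq_ji.
by apply: neq_kj; rewrite eq_ji.
Qed.

Lemma ray_condition_of_good {G : topologicalZmodType} {n : nat}
    {om : 'I_n -> G} {X : set G} :
  (forall i g, X g -> X (g + om i)) ->
  (forall g, X g -> exists i, X (g - om i)) ->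
  good om X -> forall g, X g -> ray_condition om X g.
Proof.
move=> X_up X_down goodX g Xg.
have [i ray_i] := exists_full_ray X_up X_down Xg.
case: (pselect (exists m0, (0 < m0)%N /\ om i *+ m0 = 0)) => [[m0 [m0_gt0 om_m0]]|free_i].
  right; have [j [neq_ji Xj]] : exists j, j <> i /\ X (g - om j).
    apply: contrapT => only_i; apply: goodX; exists g; split=> //.
    exists i; split; first by have := ray_i 1%N; rewrite mulr1n.
    split; last by exists m0.
    by move=> j Xj; apply: contrapT => neq_ji; apply: only_i; exists j.
  exists i, j; split=> [eq_ij|m _]; first by apply: neq_ji.
  by rewrite addrAC; apply: mem_sub_torsion m0_gt0 om_m0 Xj.
left; exists i => m m_gt0; split=> [|eq_g]; first exact: ray_i.
apply: free_i; exists m; split=> //.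
by apply/eqP; rewrite -oppr_eq0; apply/eqP/(addrI g); rewrite addr0.
Qed.

Theorem lemma4p3 (G : topologicalZmodType)
    (hG_haus : hausdorff_space G)
    (hG_lc : locally_compact [set: G])
    (hG_sc : @second_countable G)
    (n : nat) (hn : (2 <= n)%N) (om : 'I_n -> G) (X : set G)
    (hX : omega_invariant om X) :
  good om X <->
  (forall g : G, X g ->
     (exists i : 'I_n, forall m : nat, (0 < m)%N ->
        X (g - om i *+ m) /\ g - om i *+ m <> g) \/
     (exists i j : 'I_n, i <> j /\ forall m : nat, (0 < m)%N ->
        X (g - om i *+ m - om j))).
Proof.
have [_ [X_up X_down]] := hX.
split; first exact: ray_condition_of_good X_up X_down.
exact: good_of_ray_condition X_up.
Qed.
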